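(* Let $\mathcal{A}\in\mathbb{C}^{n\times n\times n\times n}$ be a CPS tensor that is also symmetric. Then $\mathcal{A}(x,x,\bar x,\bar x)=\sum_{i,j,k,l}\mathcal{A}_{ijkl}x_ix_j\bar x_k\bar x_l\ge0$ for all $x\in\mathbb{C}^n$ if and only if $\langle X,\mathcal{A}X\rangle\ge0$ for all Hermitian positive semidefinite $X\in\mathbb{C}^{n\times n}$.
   Context: A tensor $\mathcal{A}\in\mathbb{C}^{n\times n\times n\times n}$ is conjugate partial-symmetric (CPS) if $\mathcal{A}_{ijkl}=\overline{\mathcal{A}_{klij}}$ and $\mathcal{A}_{ijkl}=\mathcal{A}_{jikl}=\mathcal{A}_{ijlk}$ for all indices; it is symmetric if its entries are invariant under all permutations of the four indices. For $X\in\mathbb{C}^{n\times n}$, $\langle X,\mathcal{A}X\rangle=\sum_{i,j,k,l}\mathcal{A}_{ijkl}X_{kl}\overline{X_{ij}}$. *)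

(* The complex field is modelled as  R[i] = complex R
   for an arbitrary real closed field R (ℂ = Rstd[i] is an instance). *)
From HB Require Import structures.
From mathcomp Require Import all_boot all_order all_algebra all_fingroup.
From mathcomp Require Import complex.
Set Implicit Arguments. Unset Strict Implicit. Unset Printing Implicit Defensive.
Import Order.TTheory GRing.Theory Num.Theory.
Local Open Scope ring_scope.

Definition tensor4 (C : Type) (n : nat) := 'I_n -> 'I_n -> 'I_n -> 'I_n -> C.

Definition CPS (C : numClosedFieldType) n (A : tensor4 C n) : Prop :=
  [/\ forall i j k l, A i j k l = (A k l i j)^*,
      forall i j k l, A i j k l = A j i k l
    & forall i j k l, A i j k l = A i j l k].

Definition tensor_at (C : Type) n (A : tensor4 C n) (f : 'I_4 -> 'I_n) : C :=
  A (f (inord 0)) (f (inord 1)) (f (inord 2)) (f (inord 3)).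

Definition symmetric_tensor (C : Type) n (A : tensor4 C n) : Prop :=
  forall (s : 'S_4) (f : 'I_4 -> 'I_n), tensor_at A f = tensor_at A (f \o s).

Definition quartic_form (C : numClosedFieldType) n (A : tensor4 C n)
    (x : 'cV[C]_n) : C :=
  \sum_i \sum_j \sum_k \sum_l A i j k l * x i 0 * x j 0 * (x k 0)^* * (x l 0)^*.

Definition tensor_inner (C : numClosedFieldType) n (A : tensor4 C n)
    (X : 'M[C]_n) : C :=
  \sum_i \sum_j \sum_k \sum_l A i j k l * X k l * (X i j)^*.

Definition herm_psd (C : numClosedFieldType) n (X : 'M[C]_n) : Prop :=
  X^T = map_mx (@Num.conj_op C) X /\
  forall v : 'cV[C]_n, 0 <= ((map_mx (@Num.conj_op C) v)^T *m X *m v) 0 0.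

(* Every Hermitian positive semidefinite X is a Gram matrix sum_p p p^*
   (spectral theorem), and then <X, A X> = S := sum_(p,q) A(p, q, conj p, conj q);
   the rank-one case X = x x^* gives <X, A X> = f(x) := A(x, x, conj x, conj x).
   To see S >= 0 when f is nonnegative, average f(sum_p w_p p) over independent
   phases w_p in {1, i, -1, -i}: all mixed moments vanish except the pairings,
   so the average is 2 S - sum_p f(p), whence 2 S >= sum_p f(p) >= 0. *)

From HB Require Import structures.
From mathcomp Require Import all_boot all_order all_algebra all_fingroup.
From mathcomp Require Import complex ring sesquilinear spectral.
Set Implicit Arguments. Unset Strict Implicit. Unset Printing Implicit Defensive.
Import Order.TTheory GRing.Theory Num.Theory.
Local Open Scope ring_scope.

Section Phases.
Variable C : numClosedFieldType.

Definition phases : seq C := [:: 1; 'i; -1; -'i].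

Lemma conjCDM (a w b : C) : (a + w * b)^* = a^* + w^* * b^*.
Proof. by rewrite rmorphD rmorphM. Qed.

Lemma conjM_conjr (a b : C) : (a * b^*)^* = a^* * b.
Proof. by rewrite rmorphM; congr (_ * _); apply: conjCK. Qed.

Lemma sum_phases_const (c : C) : \sum_(w <- phases) c = 4 * c.
Proof. by rewrite !big_cons big_nil; ring. Qed.

Lemma sum_phases_prod (s a b c d e f g h : C) :
  \sum_(w <- phases) s * (a + w * e) * (b + w * f) * (c + w^* * g) * (d + w^* * h)
  = 4 * (s*a*b*c*d + s*e*f*g*h + s*a*f*c*h + s*a*f*g*d + s*e*b*c*h + s*e*b*g*d).
Proof.
(* Pairing w with -w kills the terms of odd degree; the phases 1 and i then
   cancel the terms of degree (2, 0) and (0, 2) in (w, conj w). *)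
pose P (w v : C) := s * (a + w * e) * (b + w * f) * (c + v * g) * (d + v * h).
have P_even (w v : C) : P w v + P (- w) (- v) = 2 * (s*a*b*c*d + w*w*(s*e*f*c*d)
    + w*v*(s*e*b*g*d + s*e*b*c*h + s*a*f*g*d + s*a*f*c*h)
    + v*v*(s*a*b*g*h) + w*w*(v*v)*(s*e*f*g*h)).
  by rewrite /P; ring.
have conjCNi : (- 'i)^* = 'i :> C by rewrite -conjCi conjCK.
rewrite !big_cons big_nil addr0 conjC1 conjCi conjCN1 conjCNi.
transitivity ((P 1 1 + P (-1) (-1)) + (P 'i (- 'i) + P (- 'i) (- - 'i))).
  by rewrite /P opprK; ring.
rewrite !P_even !mulrN !mulNr opprK mulCii.
ring.
Qed.

Lemma sum_phases_prod_mixed (s a b c d e g : C) :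
  \sum_(w <- phases) s * (a + w * e) * b * (c + w^* * g) * d
  = 4 * (s*a*b*c*d + s*e*b*g*d).
Proof.
have := sum_phases_prod s a b c d e 0 g 0.
under eq_bigr do rewrite !(mulr0, addr0).
by move=> ->; ring.
Qed.
End Phases.

Lemma sum4_exchange (C : nmodType) n (J : Type) (r : seq J)
    (F : J -> 'I_n -> 'I_n -> 'I_n -> 'I_n -> C) :
  \sum_(w <- r) \sum_i \sum_j \sum_k \sum_l F w i j k l
  = \sum_i \sum_j \sum_k \sum_l \sum_(w <- r) F w i j k l.
Proof.
rewrite exchange_big; apply: eq_bigr => i _; rewrite exchange_big.
apply: eq_bigr => j _; rewrite exchange_big; apply: eq_bigr => k _.
exact: exchange_big.
Qed.

Lemma eq_sum4 (C : nmodType) n (F G : 'I_n -> 'I_n -> 'I_n -> 'I_n -> C) :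
  (forall i j k l, F i j k l = G i j k l) ->
  \sum_i \sum_j \sum_k \sum_l F i j k l = \sum_i \sum_j \sum_k \sum_l G i j k l.
Proof.
by move=> eqFG; do 4!(apply: eq_bigr => ? _); apply: eqFG.
Qed.

Section TensorForm.
Variables (C : numClosedFieldType) (n : nat) (A : tensor4 C n).

Definition tensor_form (a b c d : 'cV[C]_n) : C :=
  \sum_i \sum_j \sum_k \sum_l A i j k l * a i 0 * b j 0 * (c k 0)^* * (d l 0)^*.

Lemma quartic_formE x : quartic_form A x = tensor_form x x x x.
Proof. by []. Qed.

Lemma tensor_form0l b c d : tensor_form 0 b c d = 0.
Proof. by do 4!(apply: big1 => ? _); rewrite mxE !(mulr0, mul0r). Qed.

Lemma sum_phases_quartic y x :
  \sum_(w <- phases C) quartic_form A (y + w *: x)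
  = 4 * (quartic_form A y + quartic_form A x + tensor_form y x y x
         + tensor_form y x x y + tensor_form x y y x + tensor_form x y x y).
Proof.
rewrite sum4_exchange /quartic_form /tensor_form !mulrDr.
do 4!(rewrite !mulr_sumr -!big_split /=; apply: eq_bigr => ? _).
under eq_bigr do rewrite !mxE !conjCDM.
by rewrite sum_phases_prod; ring.
Qed.

Lemma sum_phases_mixed y x p :
  \sum_(w <- phases C) tensor_form (y + w *: x) p (y + w *: x) p
  = 4 * (tensor_form y p y p + tensor_form x p x p).
Proof.
rewrite sum4_exchange /tensor_form !mulrDr.
do 4!(rewrite !mulr_sumr -!big_split /=; apply: eq_bigr => ? _).
under eq_bigr do rewrite !mxE !conjCDM.
by rewrite sum_phases_prod_mixed; ring.
Qed.

Fixpoint phase_sum (xs : seq 'cV[C]_n) (y : 'cV[C]_n) : C :=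
  if xs is x :: xs' then \sum_(w <- phases C) phase_sum xs' (y + w *: x)
  else quartic_form A y.

Lemma phase_sum_ge0 : (forall v, 0 <= quartic_form A v) ->
  forall xs y, 0 <= phase_sum xs y.
Proof.
by move=> quartic_ge0; elim=> [|x xs IH] y //=; apply: sumr_ge0 => w _.
Qed.

Definition gram_form (xs : seq 'cV[C]_n) : C :=
  \sum_(p <- xs) \sum_(q <- xs) tensor_form p q p q.

Section SymmetricPairs.
Hypotheses (A_sym12 : forall i j k l, A i j k l = A j i k l)
           (A_sym34 : forall i j k l, A i j k l = A i j l k).

Lemma tensor_formC12 a b c d : tensor_form a b c d = tensor_form b a c d.
Proof.
rewrite /tensor_form exchange_big; apply: eq_bigr => i _; apply: eq_bigr => j _.
by apply: eq_bigr => k _; apply: eq_bigr => l _; rewrite A_sym12; ring.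
Qed.

Lemma tensor_formC34 a b c d : tensor_form a b c d = tensor_form a b d c.
Proof.
apply: eq_bigr => i _; apply: eq_bigr => j _; rewrite exchange_big.
by apply: eq_bigr => k _; apply: eq_bigr => l _; rewrite A_sym34; ring.
Qed.

Lemma gram_form_cons x xs : gram_form (x :: xs)
  = quartic_form A x + 2 * \sum_(p <- xs) tensor_form x p x p + gram_form xs.
Proof.
rewrite /gram_form big_cons big_cons quartic_formE.
under [X in _ + X = _]eq_bigr do rewrite big_cons.
rewrite big_split /=.
under [\sum_(p <- xs) tensor_form p x p x]eq_bigr
  do rewrite tensor_formC12 tensor_formC34.
ring.
Qed.

Lemma phase_sumE xs y : phase_sum xs y = 4 ^+ size xs *
  (quartic_form A y + 4 * \sum_(p <- xs) tensor_form y p y p + 2 * gram_form xs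
   - \sum_(p <- xs) quartic_form A p).
Proof.
elim: xs y => [|x xs IH] y /=.
  by rewrite /gram_form !big_nil; ring.
under eq_bigr do rewrite IH.
rewrite -mulr_sumr sumrB !big_split /= sum_phases_quartic !sum_phases_const.
rewrite -mulr_sumr exchange_big /=.
under eq_bigr do rewrite sum_phases_mixed.
rewrite -mulr_sumr big_split /= gram_form_cons !big_cons exprS.
rewrite (tensor_formC12 x y x y) (tensor_formC12 x y y x) !(tensor_formC34 y x x y).
ring.
Qed.

Lemma gram_form_ge0 : (forall v, 0 <= quartic_form A v) ->
  forall xs, 0 <= gram_form xs.
Proof.
move=> quartic_ge0 xs.
have := phase_sum_ge0 quartic_ge0 xs 0.
rewrite phase_sumE quartic_formE tensor_form0l big1 => [|p _];
  last exact: tensor_form0l.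
rewrite pmulr_rge0 ?exprn_gt0 // mulr0 !add0r subr_ge0 => le_sum_gram.
rewrite -(pmulr_rge0 _ (ltr0n _ 2)).
by apply: le_trans le_sum_gram; apply: sumr_ge0.
Qed.

End SymmetricPairs.
End TensorForm.

Lemma symmetric_tensor_swap13 (T : Type) n (A : tensor4 T n) :
  symmetric_tensor A -> forall i j k l, A i j k l = A k j i l.
Proof.
move=> A_sym i j k l.
pose f (t : 'I_4) := nth l [:: i; j; k] t.
have := A_sym (tperm (inord 0) (inord 2)) f.
rewrite /tensor_at /= tpermL tpermR !tpermD; try by rewrite -val_eqE /= !inordK.
by rewrite /f !inordK.
Qed.

Lemma sum4_swap13 (C : nmodType) n (F : 'I_n -> 'I_n -> 'I_n -> 'I_n -> C) :
  \sum_i \sum_j \sum_k \sum_l F i j k l = \sum_i \sum_j \sum_k \sum_l F k j i l.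
Proof.
rewrite exchange_big /=; under eq_bigr do rewrite exchange_big /=.
exact: exchange_big.
Qed.

Local Open Scope sesquilinear_scope.

Lemma gram_mxE (C : numClosedFieldType) n (us : seq 'cV[C]_n) k l :
  (\sum_(u <- us) u *m u^t*) k l = \sum_(u <- us) u k 0 * (u l 0)^*.
Proof. by rewrite summxE; apply: eq_bigr => u _; rewrite !mxE big_ord1 !mxE. Qed.

Lemma gram_mx_adj (C : numClosedFieldType) n (us : seq 'cV[C]_n) k l :
  ((\sum_(u <- us) u *m u^t*) k l)^* = (\sum_(u <- us) u *m u^t*) l k.
Proof.
rewrite !gram_mxE rmorph_sum; apply: eq_bigr => u _.
by rewrite [RHS]mulrC; exact: conjM_conjr.
Qed.

Lemma tensor_inner_gram (C : numClosedFieldType) n (A : tensor4 C n) :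
  (forall i j k l, A i j k l = A i j l k) ->
  (forall i j k l, A i j k l = A k j i l) ->
  forall us, tensor_inner A (\sum_(u <- us) u *m u^t*) = gram_form A us.
Proof.
move=> A_sym34 A_sym13 us.
transitivity (\sum_(p <- us) \sum_(q <- us) tensor_form A p q q p); last first.
  by apply: eq_bigr => p _; apply: eq_bigr => q _; rewrite (tensor_formC34 A_sym34).
rewrite /tensor_form; under [RHS]eq_bigr do rewrite sum4_exchange.
rewrite [RHS]sum4_exchange /tensor_inner [LHS]sum4_swap13; apply: eq_sum4 => i j k l.
rewrite gram_mx_adj !gram_mxE -A_sym13 [A i j k l * _]mulr_sumr mulr_suml.
apply: eq_bigr => p _.
rewrite mulr_sumr; apply: eq_bigr => q _; ring.
Qed.

Section HermitianPSD.
Variables (C : numClosedFieldType) (n : nat).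

Lemma herm_psd_hermsymmx (X : 'M[C]_n) : herm_psd X -> X \is hermsymmx.
Proof.
move=> [X_herm _]; apply/is_hermitianmxP; rewrite expr0 scale1r.
by apply/matrixP => i j; have := congr1 (fun M : 'M[C]_n => M j i) X_herm; rewrite !mxE.
Qed.

Lemma herm_psd_gram (X : 'M[C]_n) : herm_psd X ->
  exists us : seq 'cV[C]_n, X = \sum_(u <- us) u *m u^t*.
Proof.
move=> X_psd; have /hermitian_normalmx/orthomx_spectralP := herm_psd_hermsymmx X_psd.
set P := spectralmx X; set d := spectral_diag X.
rewrite invmx_unitary ?spectral_unitarymx // => X_spectral.
have d_ge0 p : 0 <= d 0 p.
  have PPt : P *m P^t* = 1%:M by apply/unitarymxP/spectral_unitarymx.
  have PXPt : P *m X *m P^t* = diag_mx d.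
    by rewrite X_spectral !mulmxA PPt mul1mx -mulmxA PPt mulmx1.
  have := X_psd.2 (\col_k (P p k)^*); rewrite [X in 0 <= X -> _](_ : _ = d 0 p) //.
  transitivity ((P *m X *m P^t*) p p); last by rewrite PXPt mxE eqxx mulr1n.
  rewrite !mxE; apply: eq_bigr => b _; rewrite !mxE; congr (_ * _).
  by apply: eq_bigr => a _; rewrite !mxE conjCK.
exists [seq sqrtC (d 0 p) *: (row p P)^t* | p <- index_enum 'I_n].
apply/matrixP => k l; rewrite gram_mxE big_map {1}X_spectral mul_mx_diag !mxE.
apply: eq_bigr => p _; rewrite !mxE conjM_conjr [(sqrtC _)^*]geC0_conj ?sqrtC_ge0 //.
by rewrite -{1}[d 0 p]sqrtCK; ring.
Qed.

Lemma gram_herm_psd (us : seq 'cV[C]_n) : herm_psd (\sum_(u <- us) u *m u^t*).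
Proof.
split; first by apply/matrixP => k l; rewrite !mxE gram_mx_adj.
move=> v; rewrite map_trmx mulmx_sumr mulmx_suml summxE; apply: sumr_ge0 => u _.
rewrite mulmxA -mulmxA.
have -> : u^t* *m v = (v^t* *m u)^t* by rewrite trmx_mul map_mxM trmxCK.
rewrite !mxE big_ord1 !mxE; exact: mul_conjC_ge0.
Qed.
End HermitianPSD.

Local Close Scope sesquilinear_scope.
Local Open Scope complex_scope.

Theorem theorem5p6 (R : rcfType) (n : nat) (A : tensor4 R[i] n) :
  CPS A -> symmetric_tensor A ->
  ((forall x : 'cV[R[i]]_n, 0 <= quartic_form A x) <->
   (forall X : 'M[R[i]]_n, herm_psd X -> 0 <= tensor_inner A X)).
Proof.
(* Only index symmetries are used. *)
move=> [_ A_sym12 A_sym34] /symmetric_tensor_swap13 A_sym13.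
have inner_gram := tensor_inner_gram A_sym34 A_sym13.
split => [quartic_ge0 X /herm_psd_gram [us ->] | inner_ge0 x].
  by rewrite inner_gram; apply: gram_form_ge0.
have := inner_ge0 _ (gram_herm_psd [:: x]).
by rewrite inner_gram /gram_form !big_seq1.
Qed.
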